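(* Let $(W,M)$ be a reachable Kripke structure over an $\mathsf{HFOL}$ signature $\Delta$. Let $(W,N)$ be a Kripke structure obtained from $(W,M)$ by (a) replacing unreachable elements of flexible sorts by some new elements, (b) preserving the interpretation of function and relation symbols on the elements inherited from $(W,M)$, and (c) interpreting function symbols arbitrarily on the new arguments. Then $(W,M)\equiv(W,N)$, i.e. $(W,M)\models\varphi$ iff $(W,N)\models\varphi$ for all $\Delta$-sentences $\varphi$.
   Context: Hybrid first-order logic with rigid symbols ($\mathsf{HFOL}$). A signature is $\Delta=(\Sigma^{\mathtt n},\Sigma^{\mathtt r}\subseteq\Sigma)$ with $\Sigma=(S,F,P)$ a many-sorted first-order signature, $\Sigma^{\mathtt r}\subseteq\Sigma$ the rigid symbols, and $\Sigma^{\mathtt n}$ single-sorted (sort $\mathtt n$) with constants $F^{\mathtt n}$ (nominals) and unary/binary relations (modalities); sorts of $S\setminus S^{\mathtt r}$ are flexible. A Kripke structure $(W,M)$: a $\Sigma^{\mathtt n}$-structure $W$ with nonempty world set $|W|$ and $\Sigma$-structures $M_w$ all with the same reduct to $\Sigma^{\mathtt r}$. Hybrid terms use $\Sigma$-symbols and symbols $@_k\sigma$ ($k$ nominal, $\sigma$ flexible; $@_k x=x$ for rigid $x$), with $M_{w,(@_k\sigma)(t)}=M_{W_k,\sigma}(M_{w,t})$; rigid hybrid terms are built only from $@_k\sigma$-symbols and have sort $@_k s$. Sentences: atoms $k$, $\varrho$, $t_1=t_2$, $\varpi(t)$ (hybrid terms), closed under $@_k$, $\neg$, finite $\vee$, $\downarrow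 z$ (store, $z$ nominal variable), $\exists X$ ($X$ variables of rigid sorts or of sort $\mathtt n$), $\langle\lambda\rangle$ (binary modality), with the standard local Kripke semantics; $(W,M)\models\varphi$ (global) means $\varphi$ holds at all worlds. An element $e\in M_{w,s}$ is reachable if $w=W_k$ and $e=M_{w,t}$ for some nominal $k$ and rigid hybrid term $t$ of sort $@_k s$. $(W,M)$ is reachable if every world is the denotation of a nominal and every element of a rigid sort is the denotation of a rigid hybrid term. *)

From Stdlib Require Import List PeanoNat.
Import ListNotations.

Set Implicit Arguments.

Record hsig := {
  Srt : Type;
  Fun : Type;
  Pred : Type;
  fdom : Fun -> list Srt;
  fcod : Fun -> Srt;
  pdom : Pred -> list Srt;
  rigidS : Srt -> bool;
  rigidF : Fun -> bool;
  rigidP : Pred -> bool;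
  (* Sigma^r is a subsignature: rigid symbols only involve rigid sorts *)
  rigidF_sorts : forall f, rigidF f = true ->
      rigidS (fcod f) = true /\ (forall s, In s (fdom f) -> rigidS s = true);
  rigidP_sorts : forall p, rigidP p = true ->
      (forall s, In s (pdom p) -> rigidS s = true);
  (* Sigma^n : single sorted, nominals, unary relations, binary modalities *)
  Nom : Type;
  PropSym : Type;
  Modal : Type
}.

Section HFOL.
Variable D : hsig.

Inductive nterm : Type :=
| nom (k : Nom D)
| nvar (z : nat).

(* hybrid sorts: (None, s) is the sort s (evaluated at the current
   world); (Some k, s) is the sort @_k s.  @_k s = s for rigid s. *)
Definition hsort_t := (option nterm * Srt D)%type.
Definition hsort (k : nterm) (s : Srt D) : hsort_t :=
  if rigidS D s then (None, s) else (Some k, s).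
Definition bsort (s : Srt D) : hsort_t := (None, s).

(* hybrid terms (untyped syntax; sorting is given by [tty]) *)
Inductive hterm : Type :=
| tvar (x : nat)                              (* variable of a rigid sort *)
| tapp (f : Fun D) (ts : list hterm)
| tat (k : nterm) (f : Fun D) (ts : list hterm).

Inductive sen : Type :=
| Snom (k : nterm)
| Sprop (r : PropSym D)
| Seq (t1 t2 : hterm)
| Spred (p : Pred D) (ts : list hterm)
| Sat (k : nterm) (phi : sen)
| Sneg (phi : sen)
| Sor (phis : list sen)
| Sstore (z : nat) (phi : sen)
| SexN (z : nat) (phi : sen)
| SexV (x : nat) (s : Srt D) (phi : sen)
| Sdia (l : Modal D) (phi : sen).

Fixpoint lookup (G : list (nat * Srt D)) (x : nat) : option (Srt D) :=
  match G with
  | [] => None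
  | (y, s) :: G' => if Nat.eqb x y then Some s else lookup G' x
  end.

Definition nwf (Z : list nat) (k : nterm) : Prop :=
  match k with nom _ => True | nvar z => In z Z end.

(* G : rigid-sorted variables in scope, Z : nominal variables in scope *)
Inductive tty (G : list (nat * Srt D)) (Z : list nat) : hterm -> hsort_t -> Prop :=
| tty_var : forall x s, lookup G x = Some s -> tty G Z (tvar x) (bsort s)
| tty_app : forall f ts,
    Forall2 (tty G Z) ts (map bsort (fdom D f)) ->
    tty G Z (tapp f ts) (bsort (fcod D f))
| tty_at : forall k f ts,
    rigidF D f = false -> nwf Z k ->
    Forall2 (tty G Z) ts (map (hsort k) (fdom D f)) ->
    tty G Z (tat k f ts) (hsort k (fcod D f)).

Fixpoint wf (G : list (nat * Srt D)) (Z : list nat) (phi : sen) : Prop :=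
  match phi with
  | Snom k => nwf Z k
  | Sprop _ => True
  | Seq t1 t2 => exists hs, tty G Z t1 hs /\ tty G Z t2 hs
  | Spred p ts => Forall2 (tty G Z) ts (map bsort (pdom D p))
  | Sat k psi => nwf Z k /\ wf G Z psi
  | Sneg psi => wf G Z psi
  | Sor l => (fix wfl (l : list sen) : Prop :=
                match l with [] => True | psi :: l' => wf G Z psi /\ wfl l' end) l
  | Sstore z psi => wf G (z :: Z) psi
  | SexN z psi => wf G (z :: Z) psi
  | SexV x s psi => rigidS D s = true /\ wf ((x, s) :: G) Z psi
  | Sdia _ psi => wf G Z psi
  end.

Definition sentence (phi : sen) : Prop := wf [] [] phi.

(* closed rigid hybrid terms: built only from @_k sigma symbols
   (k a nominal; a rigid sigma counts as @_k sigma = sigma) *)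
Fixpoint rterm (t : hterm) : Prop :=
  match t with
  | tvar _ => False
  | tapp f ts => rigidF D f = true /\
      (fix rl (l : list hterm) : Prop :=
         match l with [] => True | u :: l' => rterm u /\ rl l' end) ts
  | tat k f ts => (exists k0, k = nom k0) /\
      (fix rl (l : list hterm) : Prop :=
         match l with [] => True | u :: l' => rterm u /\ rl l' end) ts
  end.

Record frame (Wt : Type) := {
  wnom : Nom D -> Wt;
  wprop : PropSym D -> Wt -> Prop;
  wrel : Modal D -> Wt -> Wt -> Prop;
  w_ne : inhabited Wt
}.

(* Elements of all
   carriers live in a universe type V; M_{w,s} = {v | dom w s v}.
   [vdef] is an arbitrary point of the universe (used only as a dummy
   valuation for closed sentences). *)
Record model (Wt V : Type) := {
  vdef : V;
  dom : Wt -> Srt D -> V -> Prop;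
  fn : Wt -> Fun D -> list V -> V;
  pr : Wt -> Pred D -> list V -> Prop;
  fn_typed : forall w f vs, Forall2 (dom w) (fdom D f) vs ->
      dom w (fcod D f) (fn w f vs);
  (* all M_w have the same reduct to Sigma^r *)
  dom_rigid : forall w w' s v, rigidS D s = true -> (dom w s v <-> dom w' s v);
  fn_rigid : forall w w' f vs, rigidF D f = true ->
      Forall2 (dom w) (fdom D f) vs -> fn w f vs = fn w' f vs;
  pr_rigid : forall w w' p vs, rigidP D p = true ->
      Forall2 (dom w) (pdom D p) vs -> (pr w p vs <-> pr w' p vs)
}.

Section Sem.
Variables (Wt V : Type) (Fr : frame Wt) (M : model Wt V).

Definition upd {A : Type} (r : nat -> A) (x : nat) (a : A) : nat -> A :=
  fun y => if Nat.eqb y x then a else r y.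

Definition nval (nu : nat -> Wt) (k : nterm) : Wt :=
  match k with nom k0 => wnom Fr k0 | nvar z => nu z end.

Fixpoint eval (nu : nat -> Wt) (rho : nat -> V) (w : Wt) (t : hterm) : V :=
  match t with
  | tvar x => rho x
  | tapp f ts => fn M w f (map (eval nu rho w) ts)
  | tat k f ts => fn M (nval nu k) f (map (eval nu rho w) ts)
  end.

Fixpoint sat (nu : nat -> Wt) (rho : nat -> V) (w : Wt) (phi : sen) : Prop :=
  match phi with
  | Snom k => nval nu k = w
  | Sprop r => wprop Fr r w
  | Seq t1 t2 => eval nu rho w t1 = eval nu rho w t2
  | Spred p ts => pr M w p (map (eval nu rho w) ts)
  | Sat k psi => sat nu rho (nval nu k) psi
  | Sneg psi => ~ sat nu rho w psi
  | Sor l => (fix satl (l : list sen) : Prop :=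
                match l with [] => False | psi :: l' => sat nu rho w psi \/ satl l' end) l
  | Sstore z psi => sat (upd nu z w) rho w psi
  | SexN z psi => exists w', sat (upd nu z w') rho w psi
  | SexV x s psi => exists v, dom M w s v /\ sat nu (upd rho x v) w psi
  | Sdia l psi => exists w', wrel Fr l w w' /\ sat nu rho w' psi
  end.

Definition gsat (phi : sen) : Prop :=
  forall w : Wt, sat (fun _ => w) (fun _ => vdef M) w phi.

Definition reach (w : Wt) (s : Srt D) (e : V) : Prop :=
  dom M w s e /\
  exists (k : Nom D) (t : hterm),
    wnom Fr k = w /\ rterm t /\ tty [] [] t (hsort (nom k) s) /\
    eval (fun _ => w) (fun _ => vdef M) w t = e.

Definition reachable : Prop :=
  (forall w : Wt, exists k, wnom Fr k = w) /\
  (forall w s e, rigidS D s = true -> dom M w s e -> reach w s e).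
End Sem.

(* (W,N) is obtained from (W,M) by replacing the unreachable elements of
   flexible sorts by new elements (the inherited elements being
   identified via the injection iota), preserving the interpretation of
   function and relation symbols on inherited elements, and interpreting
   function symbols arbitrarily on new arguments. *)
Definition obtained (Wt VM VN : Type) (Fr : frame Wt)
    (M : model Wt VM) (N : model Wt VN) (iota : VM -> VN) : Prop :=
  (forall e1 e2, iota e1 = iota e2 -> e1 = e2) /\
  (forall w s e, reach Fr M w s e -> dom N w s (iota e)) /\
  (forall w s e, dom M w s e -> dom N w s (iota e) -> reach Fr M w s e) /\
  (forall w s y, rigidS D s = true -> dom N w s y ->
       exists e, dom M w s e /\ y = iota e) /\
  (forall w f es, Forall2 (reach Fr M w) (fdom D f) es ->
       fn N w f (map iota es) = iota (fn M w f es)) /\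
  (forall w p es, Forall2 (reach Fr M w) (pdom D p) es ->
       (pr N w p (map iota es) <-> pr M w p es)).

End HFOL.

(* Every value of a well-sorted term is reachable at the world where its sort is evaluated.
   Indeed reachable elements are closed under the operations: every world is named by a
   nominal, and a rigid hybrid term of sort @_k1 s can be turned into one of sort @_k s,
   denoting the same element, by renaming k1 to any k naming the same world.  On reachable
   arguments N agrees with M through iota, so every term evaluates in N to the iota-image of
   its value in M.  Quantifiers range only over worlds and rigid sorts, and on rigid sorts iota
   is a bijection between the carriers of M and N; satisfaction therefore transfers by
   induction on sentences. *)

From Stdlib Require Import List PeanoNat ClassicalEpsilon.
Import ListNotations.

Set Implicit Arguments.

Lemma Forall2_map A B A' B' {R : A' -> B' -> Prop} {f : A -> A'} {g : B -> B'} l l' :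
  Forall2 R (map f l) (map g l') <-> Forall2 (fun a b => R (f a) (g b)) l l'.
Proof.
  split.
  - revert l'; induction l as [|a l IH]; intros [|b l'] H; inversion H; subst; auto.
  - induction 1; simpl; auto.
Qed.

Lemma Forall2_map_r A B B' {R : A -> B' -> Prop} {g : B -> B'} l l' :
  Forall2 R l (map g l') <-> Forall2 (fun a b => R a (g b)) l l'.
Proof. pose proof (@Forall2_map _ _ _ _ R id g l l') as H; rewrite map_id in H; exact H. Qed.

Lemma Forall_Forall2_impl A B {R R' : A -> B -> Prop} l l' :
  Forall (fun a => forall b, R a b -> R' a b) l -> Forall2 R l l' -> Forall2 R' l l'.
Proof. intros Hl HR; induction HR; inversion Hl; subst; auto. Qed.

Lemma Forall2_split_map A B C E {R : B -> C -> Prop} {f : A -> C} {g : A -> E} {h : C -> E} l l' :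
  Forall2 (fun a b => R b (f a) /\ g a = h (f a)) l l' ->
  Forall2 R l' (map f l) /\ map g l = map h (map f l).
Proof. induction 1 as [|a b l l' [Hab Hg] _ [IHR IHg]]; simpl; split; auto; congruence. Qed.

Lemma Forall2_exists_map A B C {P : A -> Prop} {R : A -> B -> Prop} {f : A -> C} l' es :
  Forall2 (fun b e => exists a, P a /\ R a b /\ f a = e) l' es ->
  exists l, Forall P l /\ Forall2 R l l' /\ map f l = es.
Proof.
  induction 1 as [|b e l' es (a & Ha & Hab & <-) _ (l & Hl & HR & <-)].
  - exists []; auto.
  - exists (a :: l); auto.
Qed.

Lemma Forall_mp A {P Q : A -> Prop} l :
  Forall (fun a => P a -> Q a) l -> Forall P l -> Forall Q l.
Proof. induction 1; inversion 1; subst; auto. Qed.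

Section Syntax.
Variable D : hsig.

Fixpoint hterm_nested_ind (P : hterm D -> Prop)
    (Hvar : forall x, P (tvar D x))
    (Happ : forall f ts, Forall P ts -> P (tapp f ts))
    (Hat : forall k f ts, Forall P ts -> P (tat k f ts)) (t : hterm D) : P t :=
  let fix all ts : Forall P ts :=
    match ts with
    | [] => Forall_nil P
    | u :: ts' => Forall_cons u (hterm_nested_ind Hvar Happ Hat u) (all ts')
    end in
  match t with
  | tvar _ x => Hvar x
  | tapp f ts => Happ f ts (all ts)
  | tat k f ts => Hat k f ts (all ts)
  end.

Fixpoint sen_nested_ind (P : sen D -> Prop)
    (Hnom : forall k, P (Snom k)) (Hprop : forall r, P (Sprop D r))
    (Heq : forall t1 t2, P (Seq t1 t2)) (Hpred : forall p ts, P (Spred p ts))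
    (Hat : forall k phi, P phi -> P (Sat k phi)) (Hneg : forall phi, P phi -> P (Sneg phi))
    (Hor : forall l, Forall P l -> P (Sor l))
    (Hstore : forall z phi, P phi -> P (Sstore z phi))
    (HexN : forall z phi, P phi -> P (SexN z phi))
    (HexV : forall x s phi, P phi -> P (SexV x s phi))
    (Hdia : forall l phi, P phi -> P (Sdia l phi)) (phi : sen D) : P phi :=
  let IH := sen_nested_ind Hnom Hprop Heq Hpred Hat Hneg Hor Hstore HexN HexV Hdia in
  let fix all l : Forall P l :=
    match l with [] => Forall_nil P | psi :: l' => Forall_cons psi (IH psi) (all l') end in
  match phi with
  | Snom k => Hnom k
  | Sprop _ r => Hprop r
  | Seq t1 t2 => Heq t1 t2
  | Spred p ts => Hpred p ts
  | Sat k psi => Hat k psi (IH psi)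
  | Sneg psi => Hneg psi (IH psi)
  | Sor l => Hor l (all l)
  | Sstore z psi => Hstore z psi (IH psi)
  | SexN z psi => HexN z psi (IH psi)
  | SexV x s psi => HexV x s psi (IH psi)
  | Sdia l psi => Hdia l psi (IH psi)
  end.

Lemma rterm_tapp f ts : rterm (tapp f ts) <-> rigidF D f = true /\ Forall (@rterm D) ts.
Proof.
  simpl; apply and_iff_compat_l.
  induction ts as [|u ts IH]; simpl.
  - split; auto.
  - rewrite Forall_cons_iff, IH; reflexivity.
Qed.

Lemma rterm_tat k f ts : rterm (tat k f ts) <-> (exists k0, k = nom D k0) /\ Forall (@rterm D) ts.
Proof.
  simpl; apply and_iff_compat_l.
  induction ts as [|u ts IH]; simpl.
  - split; auto.
  - rewrite Forall_cons_iff, IH; reflexivity.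
Qed.

Lemma wf_Sor (G : list (nat * Srt D)) Z l : wf G Z (Sor l) <-> Forall (wf G Z) l.
Proof.
  induction l as [|psi l IH]; simpl in *.
  - split; auto.
  - rewrite Forall_cons_iff, IH; reflexivity.
Qed.

Lemma sat_Sor Wt V (Fr : frame D Wt) (M : model D Wt V) nu rho w l :
  sat Fr M nu rho w (Sor l) <-> Exists (sat Fr M nu rho w) l.
Proof.
  induction l as [|psi l IH]; simpl in *.
  - rewrite Exists_nil; reflexivity.
  - rewrite Exists_cons, IH; reflexivity.
Qed.

Lemma hsort_rigid k s : rigidS D s = true -> hsort k s = bsort D s.
Proof. unfold hsort; intros ->; reflexivity. Qed.

Fixpoint rename_nom (g : nterm D -> nterm D) (t : hterm D) : hterm D :=
  match t with
  | tvar _ x => tvar D x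
  | tapp f ts => tapp f (map (rename_nom g) ts)
  | tat k f ts => tat (g k) f (map (rename_nom g) ts)
  end.

Definition rename_hsort (g : nterm D -> nterm D) (hs : hsort_t D) : hsort_t D :=
  (option_map g (fst hs), snd hs).

Lemma rename_hsort_hsort g k s : rename_hsort g (hsort k s) = hsort (g k) s.
Proof. unfold rename_hsort, hsort; destruct (rigidS D s); reflexivity. Qed.

Lemma tty_rename_nom (G : list (nat * Srt D)) Z g t hs :
  (forall k, nwf Z k -> nwf Z (g k)) ->
  tty G Z t hs -> tty G Z (rename_nom g t) (rename_hsort g hs).
Proof.
  intros Hg; revert hs.
  induction t as [x|f ts IH|k f ts IH] using hterm_nested_ind;
    intros hs Ht; inversion Ht as [? ? Hx|? ? Hts|? ? ? Hf Hk Hts]; subst; simpl.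
  - constructor; exact Hx.
  - constructor.
    replace (map (bsort D) (fdom D f)) with (map (rename_hsort g) (map (bsort D) (fdom D f)))
      by (rewrite map_map; reflexivity).
    apply Forall2_map, (Forall_Forall2_impl IH Hts).
  - rewrite rename_hsort_hsort; constructor; auto.
    replace (map (hsort (g k)) (fdom D f)) with (map (rename_hsort g) (map (hsort k) (fdom D f)))
      by (rewrite map_map; apply map_ext, rename_hsort_hsort).
    apply Forall2_map, (Forall_Forall2_impl IH Hts).
Qed.

Lemma rterm_rename_nom g t :
  (forall k0, exists k1, g (nom D k0) = nom D k1) -> rterm t -> rterm (rename_nom g t).
Proof.
  intros Hg.
  induction t as [x|f ts IH|k f ts IH] using hterm_nested_ind; simpl rename_nom.
  - auto.
  - rewrite !rterm_tapp, Forall_map; intros [Hf Hts]; split; [exact Hf|].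
    exact (Forall_mp IH Hts).
  - rewrite !rterm_tat, Forall_map; intros [[k0 ->] Hts]; split; [apply Hg|].
    exact (Forall_mp IH Hts).
Qed.

Lemma eval_rename_nom Wt V (Fr : frame D Wt) (M : model D Wt V) nu rho w g t :
  (forall k, nval Fr nu (g k) = nval Fr nu k) ->
  eval Fr M nu rho w (rename_nom g t) = eval Fr M nu rho w t.
Proof.
  intros Hg.
  induction t as [x|f ts IH|k f ts IH] using hterm_nested_ind; simpl.
  - reflexivity.
  - rewrite map_map; f_equal; apply map_ext_Forall, IH.
  - rewrite map_map, Hg; f_equal; apply map_ext_Forall, IH.
Qed.

End Syntax.

Section Reachability.
Variables (D : hsig) (Wt V : Type) (Fr : frame D Wt) (M : model D Wt V).

Local Notation closed_eval w := (eval Fr M (fun _ => w) (fun _ => vdef M) w).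

Lemma reach_at_nominal k w s e :
  reach Fr M w s e -> wnom Fr k = w ->
  exists t, rterm t /\ tty [] [] t (hsort (nom D k) s) /\ closed_eval w t = e.
Proof.
  intros (_ & k1 & t & Hk1 & Hrt & Ht & He) Hk.
  (* [nterm D] has no decidable equality, so the renaming is defined classically. *)
  set (g k' := if excluded_middle_informative (k' = nom D k1) then nom D k else k').
  exists (rename_nom g t); split; [|split].
  - apply rterm_rename_nom; [|exact Hrt].
    intros k0; unfold g; destruct excluded_middle_informative; eauto.
  - replace (hsort (nom D k) s) with (rename_hsort g (hsort (nom D k1) s)).
    + apply tty_rename_nom; [|exact Ht].
      intros k'; unfold g; destruct excluded_middle_informative; simpl; auto.
    + rewrite rename_hsort_hsort; unfold g.
      destruct excluded_middle_informative; congruence.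
  - rewrite eval_rename_nom; [exact He|].
    intros k'; unfold g; destruct excluded_middle_informative; subst; simpl; congruence.
Qed.

Hypothesis worlds_named : forall w, exists k, wnom Fr k = w.

Lemma reach_fn w f es :
  Forall2 (reach Fr M w) (fdom D f) es -> reach Fr M w (fcod D f) (fn M w f es).
Proof.
  intros Hes; split.
  { apply fn_typed; eapply Forall2_impl; [|exact Hes]; intros s e [He _]; exact He. }
  destruct (worlds_named w) as [k Hk]; exists k.
  assert (Hargs : exists ts, Forall (@rterm D) ts /\
            Forall2 (fun t s => tty [] [] t (hsort (nom D k) s)) ts (fdom D f) /\
            map (closed_eval w) ts = es).
  { apply Forall2_exists_map; eapply Forall2_impl; [|exact Hes].
    intros s e He; exact (reach_at_nominal k He Hk). }
  destruct Hargs as (ts & Hrt & Hts & <-); apply Forall2_map_r in Hts.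
  destruct (rigidF D f) eqn:Hf.
  - destruct (rigidF_sorts D f Hf) as [Hcod Hdom].
    exists (tapp f ts); split; [exact Hk|split; [|split]].
    + apply rterm_tapp; auto.
    + rewrite (hsort_rigid _ _ Hcod); constructor.
      rewrite <- (map_ext_in _ _ _ (fun s Hs => hsort_rigid (nom D k) s (Hdom s Hs))); exact Hts.
    + reflexivity.
  - exists (tat (nom D k) f ts); split; [exact Hk|split; [|split]].
    + apply rterm_tat; eauto.
    + constructor; simpl; auto.
    + simpl; rewrite Hk; reflexivity.
Qed.

Hypothesis rigid_reach : forall w s e, rigidS D s = true -> dom M w s e -> reach Fr M w s e.

Lemma reach_rigid w w' s e : rigidS D s = true -> reach Fr M w s e -> reach Fr M w' s e.
Proof. intros Hs [He _]; apply rigid_reach; [exact Hs|]; apply (dom_rigid M w); assumption. Qed.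

Definition hsort_world (nu : nat -> Wt) (w : Wt) (hs : hsort_t D) : Wt :=
  match fst hs with None => w | Some k => nval Fr nu k end.

Lemma reach_hsort_world nu w k s e :
  reach Fr M (hsort_world nu w (hsort k s)) (snd (hsort k s)) e <->
  reach Fr M (nval Fr nu k) s e.
Proof.
  unfold hsort_world, hsort; destruct (rigidS D s) eqn:Hs; simpl.
  - split; apply reach_rigid; exact Hs.
  - reflexivity.
Qed.

End Reachability.

Section Transfer.
Variables (D : hsig) (Wt VM VN : Type) (Fr : frame D Wt)
  (M : model D Wt VM) (N : model D Wt VN) (iota : VM -> VN).
Hypothesis worlds_named : forall w, exists k, wnom Fr k = w.
Hypothesis rigid_reach : forall w s e, rigidS D s = true -> dom M w s e -> reach Fr M w s e.
Hypothesis HMN : obtained Fr M N iota.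

Definition related_vals (G : list (nat * Srt D)) (rho : nat -> VM) (rhoN : nat -> VN) : Prop :=
  forall x s, lookup D G x = Some s ->
    rigidS D s = true /\ (forall w, dom M w s (rho x)) /\ rhoN x = iota (rho x).

Lemma related_vals_nil rho rhoN : related_vals [] rho rhoN.
Proof. intros x s H; discriminate H. Qed.

Lemma related_vals_upd {G rho rhoN s w e} x :
  related_vals G rho rhoN -> rigidS D s = true -> dom M w s e ->
  related_vals ((x, s) :: G) (upd rho x e) (upd rhoN x (iota e)).
Proof.
  intros Hrho Hs He y s'; unfold upd; simpl.
  destruct (Nat.eqb y x).
  - intros [= <-]; repeat split; [exact Hs|].
    intros w'; apply (dom_rigid M w); assumption.
  - apply Hrho.
Qed.

Lemma dom_rigid_transfer w s y :
  rigidS D s = true -> dom N w s y <-> exists e, dom M w s e /\ y = iota e.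
Proof.
  destruct HMN as (_ & Hkeep & _ & Hnew & _); intros Hs; split.
  - apply Hnew; exact Hs.
  - intros (e & He & ->); apply Hkeep, rigid_reach; assumption.
Qed.

Lemma eval_transfer G Z nu rho rhoN w t hs :
  related_vals G rho rhoN -> tty G Z t hs ->
  reach Fr M (hsort_world Fr nu w hs) (snd hs) (eval Fr M nu rho w t) /\
  eval Fr N nu rhoN w t = iota (eval Fr M nu rho w t).
Proof.
  destruct HMN as (_ & _ & _ & _ & Hfn & _); intros Hrho; revert hs.
  induction t as [x|f ts IH|k f ts IH] using hterm_nested_ind;
    intros hs Ht; inversion Ht as [? s Hx|? ? Hts|? ? ? _ _ Hts]; subst; simpl.
  - destruct (Hrho x s Hx) as (Hs & Hd & ->).
    split; [apply rigid_reach; auto | reflexivity].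
  - apply (Forall_Forall2_impl IH), Forall2_map_r in Hts; cbn in Hts.
    apply Forall2_split_map in Hts.
    destruct Hts as [Hreach ->]; split.
    + apply reach_fn; assumption.
    + apply Hfn; assumption.
  - assert (Hargs : Forall2 (fun t s =>
        reach Fr M (nval Fr nu k) s (eval Fr M nu rho w t) /\
        eval Fr N nu rhoN w t = iota (eval Fr M nu rho w t)) ts (fdom D f)).
    { apply (Forall_Forall2_impl IH), Forall2_map_r in Hts.
      eapply Forall2_impl; [|exact Hts]; intros t s [Hr He]; split; [|exact He].
      apply (reach_hsort_world rigid_reach) in Hr; exact Hr. }
    apply Forall2_split_map in Hargs; destruct Hargs as [Hreach ->]; split.
    + apply (reach_hsort_world rigid_reach), (reach_fn worlds_named), Hreach.
    + apply Hfn; assumption.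
Qed.

Lemma sat_transfer phi : forall G Z nu rho rhoN w,
  wf G Z phi -> related_vals G rho rhoN ->
  (sat Fr M nu rho w phi <-> sat Fr N nu rhoN w phi).
Proof.
  destruct HMN as (Hinj & _ & _ & _ & _ & Hpr).
  induction phi as [k|r|t1 t2|p ts|k phi IH|phi IH|l IH|z phi IH|z phi IH|x s phi IH|l phi IH]
    using sen_nested_ind; intros G Z nu rho rhoN w Hwf Hrho.
  - reflexivity.
  - reflexivity.
  - destruct Hwf as (hs & H1 & H2); simpl.
    rewrite (proj2 (eval_transfer nu w Hrho H1)), (proj2 (eval_transfer nu w Hrho H2)).
    split; [intros ->; reflexivity | apply Hinj].
  - assert (Hargs : Forall2 (fun t s =>
        reach Fr M w s (eval Fr M nu rho w t) /\
        eval Fr N nu rhoN w t = iota (eval Fr M nu rho w t)) ts (pdom D p)).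
    { simpl in Hwf; rewrite Forall2_map_r in Hwf; eapply Forall2_impl; [|exact Hwf].
      intros t s Ht; exact (eval_transfer nu w Hrho Ht). }
    apply Forall2_split_map in Hargs; destruct Hargs as [Hreach Hmap]; simpl.
    rewrite Hmap; symmetry; apply Hpr, Hreach.
  - destruct Hwf as [_ Hwf]; apply (IH G Z); assumption.
  - simpl; rewrite (IH G Z nu rho rhoN w Hwf Hrho); reflexivity.
  - rewrite !sat_Sor, !Exists_exists.
    apply wf_Sor in Hwf; rewrite Forall_forall in IH, Hwf.
    split; intros (psi & Hin & Hpsi); exists psi; split; auto;
      apply (IH psi Hin G Z nu rho rhoN w (Hwf psi Hin) Hrho); exact Hpsi.
  - apply (IH G (z :: Z)); assumption.
  - split; intros [w' Hw']; exists w'; apply (IH G (z :: Z) _ rho rhoN); assumption.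
  - destruct Hwf as [Hs Hwf]; split.
    + intros (e & He & Hsat); exists (iota e); split.
      * apply dom_rigid_transfer; eauto.
      * apply (IH ((x, s) :: G) Z _ _ _ _ Hwf (related_vals_upd x Hrho Hs He)); exact Hsat.
    + intros (y & Hy & Hsat).
      apply dom_rigid_transfer in Hy as (e & He & ->); [|exact Hs].
      exists e; split; [exact He|].
      apply (IH ((x, s) :: G) Z _ _ _ _ Hwf (related_vals_upd x Hrho Hs He)); exact Hsat.
  - split; intros (w' & Hw' & Hsat); exists w';
      (split; [exact Hw' | apply (IH G Z nu rho rhoN w' Hwf Hrho), Hsat]).
Qed.

End Transfer.

Theorem lemma3p1 (D : hsig) (Wt VM VN : Type) (Fr : frame D Wt)
  (M : model D Wt VM) (N : model D Wt VN) (iota : VM -> VN) :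
  reachable Fr M ->
  obtained Fr M N iota ->
  forall phi : sen D, sentence phi -> (gsat Fr M phi <-> gsat Fr N phi).
Proof.
  intros [worlds_named rigid_reach] HMN phi Hphi.
  assert (Hlocal : forall w, sat Fr M (fun _ => w) (fun _ => vdef M) w phi <->
                             sat Fr N (fun _ => w) (fun _ => vdef N) w phi).
  { intros w; apply (sat_transfer worlds_named rigid_reach HMN) with (G := []) (Z := []);
      [exact Hphi | apply related_vals_nil]. }
  split; intros Hsat w; apply Hlocal, Hsat.
Qed.
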